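(* Let $G=(V,E)$ be an event graph and let $\mathcal C$ be the unique sink component of $\mathrm{dec}(G)$. For every $v\in V$ and every $X\subseteq\mathcal U_{|V}$, the node $(v,X)$ belongs to $\mathcal C$ if and only if there exists a closed walk $W$ in $G$ such that (1) $W$ starts and ends at $v$; (2) for each $x\in\mathcal U_{|V}$, $W$ contains at least one node labeled $\mathtt{i}x$ or $\mathtt{d}x$; (3) for each $x\in\mathcal U_{|V}$, $x\in X$ if and only if the last node of $W$ whose label refers to $x$ is labeled $\mathtt{i}x$ (equivalently, $x\notin X$ iff that last node is labeled $\mathtt{d}x$).
   Context: An event graph is a finite, connected, undirected graph $G=(V,E)$, with $n=|V|$, in which every node $v$ carries a label that is either $\mathtt{i}x_v$ (insertion of $x_v$) or $\mathtt{d}x_v$ (deletion of $x_v$), where $x_v$ is an element of a finite universe $\mathcal U$. Write $\mathcal U_{|V}=\{x_v : v\in V\}$. It is assumed that for each $x\in\mathcal U_{|V}$ at least one node is labeled $\mathtt{i}x$ and at least one node is labeled $\mathtt{d}x$. The decorated graph $\mathrm{dec}(G)$ is the directed graph with vertex set $V\times 2^{\mathcal U_{|V}}$ in which $((u,X),(v,Y))$ is an edge if and only if $\{u,v\}\in E$ and $Y=X\cup\{x_v\}$ when $v$ is labeled $\mathtt{i}x_v$, respectively $Y=X\setminus\{x_v\}$ when $v$ is labeled $\mathtt{d}x_v$. A sink component of $\mathrm{dec}(G)$ is a strongly connected component of $\mathrm{dec}(G)$ from which no edge leads to a different strongly connected component; $\mathrm{dec}(G)$ has exactly one sink component, denoted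 $\mathcal C$. A walk in a graph is a finite sequence of nodes in which each node is joined by an edge to its successor (nodes may repeat); it is closed if its first and last nodes coincide. *)

From mathcomp Require Import all_boot.
Set Implicit Arguments. Unset Strict Implicit. Unset Printing Implicit Defensive.

Section EventGraph.
Variables (V U : finType).
Variable e : rel V.
(* ins v = true iff v is labeled "i (lab v)", false iff labeled "d (lab v)" *)
Variable ins : pred V.
Variable lab : V -> U.

Definition UV : {set U} := [set lab v | v in V].

Definition event_graph : Prop :=
  [/\ symmetric e, irreflexive e, (forall u v, connect e u v) &
      (forall a, a \in UV -> (exists v, lab v = a /\ ins v) /\
                              (exists v, lab v = a /\ ~~ ins v))].

Definition dec_vertex (p : V * {set U}) : bool := p.2 \subset UV.

Definition upd (X : {set U}) (v : V) : {set U} :=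
  if ins v then X :|: [set lab v] else X :\ lab v.

Definition dec_edge : rel (V * {set U}) :=
  fun p q => [&& dec_vertex p, dec_vertex q, e p.1 q.1 & q.2 == upd p.2 q.1].

Definition scc (C : {set V * {set U}}) : Prop :=
  [/\ C != set0,
      {subset C <= dec_vertex},
      (forall a b, a \in C -> b \in C -> connect dec_edge a b) &
      (forall a b, a \in C -> dec_vertex b -> connect dec_edge a b ->
                   connect dec_edge b a -> b \in C)].

Definition sink_component (C : {set V * {set U}}) : Prop :=
  scc C /\ (forall a b, a \in C -> dec_edge a b -> b \in C).

(* the closed walk w = v :: p (nodes in order) starts and ends at v *)
Definition closed_walk_at (v : V) (p : seq V) : bool :=
  path e v p && (last v p == v).

Definition walk_realizes (v : V) (p : seq V) (X : {set U}) : Prop :=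
  forall a, a \in UV ->
    let f := [seq n <- v :: p | lab n == a] in
    f != [::] /\ ((a \in X) = ins (last v f)).
End EventGraph.

From mathcomp Require Import all_boot.
Set Implicit Arguments. Unset Strict Implicit.

(* Walking along a walk  v :: q  of G while carrying a set Y
   is exactly walking in dec(G): the state reached is  foldl (upd ..) Y q,
   and membership of a in that state is decided by the last node of the walk
   referring to a (if there is one).  Hence:
   - if (v, X) lies in the sink component C, follow a closed walk at v that
     visits every node; we stay in C and, C being strongly connected, can
     walk back to (v, X).  The concatenation is a closed walk at v visiting
     every node and returning to the state X, which is condition (3).
   - conversely, given a realizing closed walk  v :: p, reach v from some
     element of C through an edge entering v, then follow p.  Every element
     of U_{|V} is rewritten along  v :: p, so the final state is X whatever
     the starting state was; and C is closed under reachability. *)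

Section DecoratedWalks.
Variables (V U : finType) (e : rel V) (ins : pred V) (lab : V -> U).

Local Notation run := (foldl (upd ins lab)).
Local Notation dec := (dec_edge e ins lab).

Lemma upd_sub (Y : {set U}) (x : V) :
  Y \subset UV lab -> upd ins lab Y x \subset UV lab.
Proof.
move=> sYU; rewrite /upd; case: (ins x).
  by rewrite subUset sub1set sYU; apply: imset_f.
exact: subset_trans (subsetDl _ _) sYU.
Qed.

Lemma run_sub (Y : {set U}) (q : seq V) :
  Y \subset UV lab -> run Y q \subset UV lab.
Proof. by elim: q Y => //= x q IHq Y sYU; apply/IHq/upd_sub. Qed.

Lemma mem_run (Y : {set U}) (q : seq V) (a : U) :
  (a \in run Y q) = last (a \in Y) [seq ins n | n <- [seq n <- q | lab n == a]].
Proof.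
elim: q Y => //= x q IHq Y; rewrite IHq /upd.
case: (eqVneq (lab x) a) => [<- | neq] /=.
  by case: (ins x); rewrite ?in_setU ?in_setD1 ?in_set1 eqxx ?orbT.
by case: (ins x); rewrite ?in_setU ?in_setD1 ?in_set1 eq_sym (negbTE neq) ?orbF.
Qed.

Lemma mem_run_last (Y : {set U}) (q : seq V) (a : U) (d : V) :
  [seq n <- q | lab n == a] != [::] ->
  (a \in run Y q) = ins (last d [seq n <- q | lab n == a]).
Proof.
rewrite mem_run; case: [seq n <- q | lab n == a] => //= n f _.
by rewrite (last_map ins).
Qed.

Lemma connect_run (v : V) (q : seq V) (Y : {set U}) :
  path e v q -> Y \subset UV lab -> connect dec (v, Y) (last v q, run Y q).
Proof.
elim: q v Y => [|x q IHq] v Y /=; first by rewrite connect0.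
move=> /andP [evx pxq] sYU.
apply: connect_trans (IHq _ _ pxq (upd_sub x sYU)); apply: connect1.
by rewrite /dec_edge /dec_vertex /= sYU upd_sub // evx eqxx.
Qed.

Lemma connect_dec_walk (s t : V * {set U}) :
  connect dec s t ->
  exists r, [/\ path e s.1 r, last s.1 r = t.1 & t.2 = run s.2 r].
Proof.
move/connectP=> [ds pds ->] {t}; elim: ds s pds => [|c ds IHds] s /=.
  by exists [::].
move=> /andP [/and4P [_ _ esc /eqP c2] pds].
have [r [pr lr rr]] := IHds c pds.
by exists (c.1 :: r); rewrite /= esc pr -c2.
Qed.

Lemma sink_connect_closed (C : {set V * {set U}}) (s t : V * {set U}) :
  sink_component e ins lab C -> s \in C -> connect dec s t -> t \in C.
Proof.
move=> [_ sinkC] sC /connectP [ds pds ->] {t}.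
elim: ds s sC pds => //= c ds IHds s sC /andP [sc pds].
exact: IHds (sinkC _ _ sC sc) pds.
Qed.

(* Along a realizing walk v :: p every element of U_{|V} is rewritten to its
   value in X, so the run ends in X whatever the starting state. *)
Lemma run_realizing_walk (v : V) (p : seq V) (X Y : {set U}) :
  X \subset UV lab -> Y \subset UV lab -> walk_realizes ins lab v p X ->
  run Y (v :: p) = X.
Proof.
move=> sXU sYU realX; apply/setP => a.
have [aU | aNU] := boolP (a \in UV lab).
  by have [visited ->] := realX a aU; rewrite (mem_run_last _ v visited).
rewrite (contraNF (subsetP sXU a) aNU).
exact: contraNF (subsetP (run_sub (v :: p) sYU) a) aNU.
Qed.

Lemma realizes_of_covering (v : V) (p : seq V) (X : {set U}) :
  (forall x, x \in p) -> run X p = X -> walk_realizes ins lab v p X.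
Proof.
move=> covers runX a /imsetP [x _ ->] /=.
have visited : [seq n <- p | lab n == lab x] != [::].
  by rewrite -has_filter; apply/hasP; exists x.
have last_cons : last v [seq n <- v :: p | lab n == lab x] =
                 last v [seq n <- p | lab n == lab x] by rewrite /=; case: ifP.
split; first by rewrite /=; case: ifP.
by rewrite last_cons -(mem_run_last X v visited) runX.
Qed.

End DecoratedWalks.

Section GraphWalks.
Variables (V : finType) (e : rel V).

Lemma covering_closed_walk (v u : V) :
  (forall x y, connect e x y) -> e v u -> e u v ->
  exists q, [/\ path e v q, last v q = v & forall x, x \in q].
Proof.
move=> conn evu euv.
suff [q [pq lq _ sq]] : exists q,
    [/\ path e v q, last v q = v, v \in q & {subset enum V <= q}].
  by exists q; split=> // x; apply: sq; rewrite mem_enum.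
elim: (enum V) => [|x s [q [pq lq vq sq]]].
  by exists [:: u; v]; rewrite /= evu euv !inE eqxx orbT.
have /connectP [r1 pr1 lr1] := conn v x; have /connectP [r2 pr2 lr2] := conn x v.
have xr1 : x \in v :: r1 by rewrite lr1 mem_last.
exists (q ++ r1 ++ r2); split.
- by rewrite cat_path pq lq cat_path pr1 -lr1 pr2.
- by rewrite !last_cat lq -lr1 -lr2.
- by rewrite mem_cat vq.
move=> y /[!inE] /orP [/eqP -> | ys]; last by rewrite mem_cat sq.
by move: xr1; rewrite inE => /orP [/eqP -> | xr]; rewrite !mem_cat ?vq ?xr ?orbT.
Qed.

End GraphWalks.

(* In an event graph every node has a neighbour: lab v has both an insertion
   and a deletion node, one of which differs from v, and G is connected. *)
Lemma event_graph_neighbour (V U : finType) (e : rel V) (ins : pred V)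
    (lab : V -> U) (v : V) :
  event_graph e ins lab -> exists u, e v u.
Proof.
move=> [_ _ conn hasID].
have [w wv] : exists w, w != v.
  have labU : lab v \in UV lab by apply: imset_f.
  have [[w1 [_ i1]] [w2 [_ i2]]] := hasID _ labU.
  case: (boolP (ins v)) => iv; [exists w2 | exists w1]; apply/eqP => wv.
    by rewrite wv iv in i2.
  by rewrite wv (negbTE iv) in i1.
have /connectP [[|u r] /= pr lr] := conn v w; first by rewrite lr eqxx in wv.
by exists u; case/andP: pr.
Qed.

Theorem mainTheorem3 (V U : finType) (e : rel V) (ins : pred V) (lab : V -> U)
  (C : {set V * {set U}}) :
  event_graph e ins lab ->
  sink_component e ins lab C ->
  forall (v : V) (X : {set U}), X \subset UV lab ->
    ((v, X) \in C <->
     exists p : seq V, closed_walk_at e v p /\ walk_realizes ins lab v p X).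
Proof.
move=> evG sinkC v X sXU; have [[/set0Pn [[w Z] wZC] subC connC _] _] := sinkC.
have [esym _ conn _] := evG; have [u evu] := event_graph_neighbour v evG.
have euv : e u v by rewrite esym.
split=> [vXC | [p [/andP [pp /eqP lp] realX]]].
- have [q [pq lq covq]] := covering_closed_walk conn evu euv.
  have liftq := connect_run ins pq sXU; rewrite lq in liftq.
  have vYC := sink_connect_closed sinkC vXC liftq.
  have [r [pr lr runr]] := connect_dec_walk (connC _ _ vYC vXC).
  rewrite /= in pr lr runr.
  exists (q ++ r); split.
    by rewrite /closed_walk_at cat_path pq lq pr last_cat lq lr eqxx.
  apply: realizes_of_covering => [x | ]; first by rewrite mem_cat covq.
  by rewrite foldl_cat -runr.
- have /connectP [r pr lr] := conn w u.
  have sZU : Z \subset UV lab := subC _ wZC.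
  have walk : path e w (r ++ v :: p) by rewrite cat_path pr -lr /= euv pp.
  have := sink_connect_closed sinkC wZC (connect_run ins walk sZU).
  by rewrite last_cat /= lp foldl_cat (run_realizing_walk sXU _ realX) //;
    apply: run_sub.
Qed.
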